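(* Let $Q\in\mathcal{Q}(n,d,m)$ and $\underline{\delta}\in\Omega_3(Q)$. Then $|\underline{\delta}|\leq m(d-n+1)$.
   Context: A quiver $Q$ is a finite oriented graph; for an arrow $a$, $a''$ is its tail and $a'$ its head. A path $a=a_1\cdots a_s$ ($a_i$ arrows) satisfies $a_i'=a_{i+1}''$; it is closed if $a_1''=a_s'$; $V(a)=\{a_1'',a_1',\dots,a_s'\}$, $A(a)=\{a_1,\dots,a_s\}$. A closed path is primitive if each vertex of $V(a)$ is the head of exactly one $a_i$. $m(Q)$ is the maximal degree of a primitive closed path; $Q$ is strongly connected if some closed path contains all vertices; $\mathcal{Q}(n,d,m)$ is the set of strongly connected quivers with $n$ vertices, $d$ arrows and $m(Q)=m$. The multidegree $\mathrm{mdeg}(a)\in\mathbb{N}^{\#A(Q)}$ of a path $a$ has $b$-component equal to the number of $i$ with $a_i=b$. For $\underline{\delta}\in\mathbb{N}^{\#A(Q)}$, $|\underline{\delta}|=\sum_b\delta_b$. $\Omega_0(Q)$ is the set of $\mathrm{mdeg}(h)$ for closed paths $h$ in $Q$ with $A(h)=A(Q)$. A path $a$ is $\underline{\delta}$-double if it is a primitive closed path and $\delta_{a_i}\geq2$ for all $i$. $\Omega_3(Q)$ is the set of $\underline{\delta}\in\Omega_0(Q)$ such that there is no $\underline{\delta}$-double path in $Q$. *)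

From mathcomp Require Import all_boot.
Set Implicit Arguments. Unset Strict Implicit. Unset Printing Implicit Defensive.

(* A quiver Q with n vertices ('I_n) and d arrows ('I_d), given by the tail
   map tl (b |-> b'') and the head map hd (b |-> b').  Multiple arrows and
   loops are allowed.  A path a = a_1 ... a_s (s >= 1) is the sequence
   [:: a_1; ...; a_s] of arrows. *)
Section Quiver.
Variables (n d : nat) (tl hd : 'I_d -> 'I_n).

Definition is_path (a : seq 'I_d) : bool :=
  if a is x :: s then path (fun b c => hd b == tl c) x s else false.

Definition is_closed_path (a : seq 'I_d) : bool :=
  if a is x :: s then path (fun b c => hd b == tl c) x s && (tl x == hd (last x s))
  else false.

Definition Vset (a : seq 'I_d) : {set 'I_n} :=
  if a is x :: s then tl x |: [set hd b | b in a] else set0.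

Definition Aset (a : seq 'I_d) : {set 'I_d} := [set b in a].

Definition primitive (a : seq 'I_d) : bool :=
  is_closed_path a && [forall v in Vset a, count (fun b => hd b == v) a == 1].

Definition mQ_is (m : nat) : Prop :=
  (exists a, primitive a /\ size a = m) /\
  (forall a, primitive a -> size a <= m).

Definition strongly_connected : Prop :=
  exists a, is_closed_path a /\ Vset a = [set: 'I_n].

(* Q \in Q(n,d,m) (n, d are built into the type of Q) *)
Definition in_Qndm (m : nat) : Prop := strongly_connected /\ mQ_is m.

Definition mdeg (a : seq 'I_d) : 'I_d -> nat := fun b => count_mem b a.

Definition weight (delta : 'I_d -> nat) : nat := \sum_(b : 'I_d) delta b.

Definition in_Omega0 (delta : 'I_d -> nat) : Prop :=
  exists h, [/\ is_closed_path h, Aset h = [set: 'I_d] & mdeg h =1 delta].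

Definition double_path (delta : 'I_d -> nat) (a : seq 'I_d) : bool :=
  primitive a && all (fun b => 2 <= delta b) a.

Definition in_Omega3 (delta : 'I_d -> nat) : Prop :=
  in_Omega0 delta /\ ~ (exists a, double_path delta a).
End Quiver.

From mathcomp Require Import all_boot all_algebra zify.
Import GRing.Theory.
Set Implicit Arguments. Unset Strict Implicit. Unset Printing Implicit Defensive.

(* A closed path h with multidegree delta is a permutation of a concatenation
   of k simple cycles. These are primitive, so |delta| = size h <= k m. As no
   cycle is delta-double, each one contains an arrow b with delta_b = 1, which
   then lies on no other cycle; hence the multidegrees of the k cycles are
   linearly independent vectors of the cycle space, the kernel of the incidence
   map Q^d -> Q^n. For a strongly connected quiver this map has rank at least
   n - 1, so k <= d - n + 1. *)

Lemma nonuniq_map_split (T U : eqType) (f : T -> U) (s : seq T) :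
  ~~ uniq (map f s) -> exists s1 x s2 y s3, s = s1 ++ x :: s2 ++ y :: s3 /\ f x = f y.
Proof.
elim: s => [|z s IH] //=; rewrite negb_and negbK => /orP[/mapP[y y_s fzy] | /IH].
  by case/splitPr: y_s => s2 s3; exists [::], z, s2, y, s3.
by case=> s1 [x [s2 [y [s3 [-> fxy]]]]]; exists (z :: s1), x, s2, y, s3.
Qed.

Lemma sumr_count_mem (T : finType) (V : nmodType) (s : seq T) (F : T -> V) :
  (\sum_x F x *+ count_mem x s = \sum_(x <- s) F x)%R.
Proof.
elim: s => [|y s IH]; first by rewrite big_nil big1.
rewrite big_cons -IH /= (eq_bigr _ (fun x _ => mulrnDr (F x) _ _)) big_split /=.
congr (_ + _)%R; rewrite (bigD1 y) //= eqxx big1 ?addr0 // => x.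
by rewrite eq_sym => /negbTE->.
Qed.

Lemma sum_count_mem (T : finType) (s : seq T) : \sum_x count_mem x s = size s.
Proof.
elim: s => [|y s IH]; first by rewrite big1.
rewrite big_split /= IH (bigD1 y) //= eqxx big1 // => x.
by rewrite eq_sym => /negbTE->.
Qed.

Lemma sumr_mul_eq_natr (I : finType) (R : pzSemiRingType) (F : I -> R) (a : I) :
  (\sum_i F i * (a == i)%:R = F a)%R.
Proof.
rewrite (bigD1 a) //= eqxx mulr1 big1 ?addr0 // => i ia.
by rewrite eq_sym (negbTE ia) mulr0.
Qed.

Lemma sum_nat_le1_indicator (I : finType) (F : I -> nat) (i : I) :
  \sum_j F j <= 1 -> 0 < F i -> forall j, F j = (i == j).
Proof.
move=> le1 Fi_gt0; have /sum_nat_eq1[i' [_ Fi'1 F0]] : \sum_(j | true) F j == 1.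
  by rewrite eqn_leq le1 (leq_trans Fi_gt0) // (bigD1 i) //= leq_addr.
have <- : i' = i by apply/eqP; apply: contraTT Fi_gt0 => ii'; rewrite F0 // eq_sym.
by move=> j; case: eqVneq => [<- // | ji']; rewrite F0 // eq_sym.
Qed.

Lemma exists_private_arrow (T : eqType) k (C : 'I_k -> seq T) (delta : T -> nat) i :
  (forall b, delta b = \sum_j count_mem b (C j)) ->
  ~~ all (fun b => 2 <= delta b) (C i) ->
  exists b, forall j, count_mem b (C j) = (i == j).
Proof.
move=> deltaE /allPn[b b_Ci]; rewrite -ltnNge ltnS deltaE => le1.
by exists b; apply: sum_nat_le1_indicator le1 _; rewrite -has_count has_pred1.
Qed.

Section Cycles.
Variables (n d : nat) (tl hd : 'I_d -> 'I_n).

Definition consecutive (b c : 'I_d) : bool := hd b == tl c.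

Lemma closed_pathE (a : seq 'I_d) :
  is_closed_path tl hd a = (a != [::]) && cycle consecutive a.
Proof. by case: a => [|x s] //=; rewrite rcons_path eq_sym. Qed.

Lemma cycle_tl_head (x : 'I_d) (s : seq 'I_d) :
  cycle consecutive (x :: s) -> tl x = hd (last x s).
Proof. by rewrite /= rcons_path => /andP[_ /eqP]. Qed.

Lemma path_map_tl (x : 'I_d) (s : seq 'I_d) :
  path consecutive x s -> map tl s = map hd (belast x s).
Proof. by elim: s x => [|y s IH] x //= /andP[/eqP-> /IH->]. Qed.

Lemma cycle_map_tl (c : seq 'I_d) :
  cycle consecutive c -> map tl c = rotr 1 (map hd c).
Proof.
case: c => [|x s] // cyc; move: (cyc); rewrite /= rcons_path => /andP[pth _].
rewrite -[hd x :: _]/(map hd (x :: s)) (lastI x s) map_rcons rotr1_rcons.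
by rewrite -(cycle_tl_head cyc) (path_map_tl pth).
Qed.

Lemma cycle_sum_tl (V : nmodType) (F : 'I_n -> V) (c : seq 'I_d) :
  cycle consecutive c -> (\sum_(b <- c) F (tl b) = \sum_(b <- c) F (hd b))%R.
Proof.
move=> cyc; rewrite -(big_map tl xpredT F) -(big_map hd xpredT F) (cycle_map_tl cyc).
by apply: perm_big; rewrite perm_rotr.
Qed.

Lemma cycle_cat_rcons (p q : seq 'I_d) (x y : 'I_d) : hd x = hd y ->
  cycle consecutive (rcons p x ++ rcons q y) =
  cycle consecutive (rcons p x) && cycle consecutive (rcons q y).
Proof.
move=> hxy; rewrite !(cycle_path x) last_cat !last_rcons cat_path last_rcons.
have pathyx r : path consecutive y r = path consecutive x r.
  by case: r => [|z r] //=; rewrite /consecutive hxy.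
by rewrite !pathyx andbC.
Qed.

Lemma cycle_split_repeated_head (a : seq 'I_d) :
  cycle consecutive a -> ~~ uniq (map hd a) ->
  exists p q : seq 'I_d, [/\ p != [::], q != [::], perm_eq a (p ++ q),
                             cycle consecutive p & cycle consecutive q].
Proof.
move=> cyc /nonuniq_map_split[s1 [x [s2 [y [s3 [a_eq hxy]]]]]]; subst a.
exists (rcons s2 y), (rcons (s3 ++ s1) x).
have rot_a : rot (size (rcons s1 x)) (s1 ++ x :: s2 ++ y :: s3)
           = rcons s2 y ++ rcons (s3 ++ s1) x.
  by rewrite -cat_rcons rot_size_cat -catA -cat_rcons rcons_cat.
have : cycle consecutive (rcons s2 y ++ rcons (s3 ++ s1) x) by rewrite -rot_a rot_cycle.
rewrite cycle_cat_rcons // => /andP[cyc_p cyc_q].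
split=> //; rewrite -?size_eq0 ?size_rcons //.
by rewrite -rot_a perm_sym perm_rot.
Qed.

Definition simple_cycle (c : seq 'I_d) : bool :=
  [&& c != [::], cycle consecutive c & uniq (map hd c)].

Lemma simple_cycle_decomposition (a : seq 'I_d) : cycle consecutive a ->
  exists cs, all simple_cycle cs /\ perm_eq a (flatten cs).
Proof.
elim: {a}(size a).+1 {-2}a (ltnSn (size a)) => // N IH a size_a cyc.
have [uniq_a | /(cycle_split_repeated_head cyc)] := boolP (uniq (map hd a)).
  case: (eqVneq a [::]) => [-> | a_nil]; first by exists [::].
  by exists [:: a]; rewrite /= cats0 /simple_cycle a_nil cyc uniq_a.
case=> p [q [p_nil q_nil a_pq cyc_p cyc_q]].
have size_pq : size a = size p + size q by rewrite -size_cat (perm_size a_pq).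
have [p_pos q_pos] : 0 < size p /\ 0 < size q by rewrite !lt0n !size_eq0.
have [cp [sp p_cp]] : exists cs, all simple_cycle cs /\ perm_eq p (flatten cs).
  by apply: IH cyc_p; lia.
have [cq [sq q_cq]] : exists cs, all simple_cycle cs /\ perm_eq q (flatten cs).
  by apply: IH cyc_q; lia.
exists (cp ++ cq); rewrite all_cat sp sq flatten_cat; split=> //.
by rewrite (perm_trans a_pq) // perm_cat.
Qed.

Lemma mem_Vset_cycle (c : seq 'I_d) (v : 'I_n) :
  cycle consecutive c -> (v \in Vset tl hd c) = (v \in map hd c).
Proof.
case: c => [|x s] cyc; first by rewrite /Vset in_set0.
rewrite /Vset in_setU1 (cycle_tl_head cyc).
have -> : (v \in [set hd b | b in x :: s]) = (v \in map hd (x :: s)).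
  by apply/imsetP/mapP.
by case: eqP => // ->; rewrite map_f ?mem_last.
Qed.

Lemma simple_cycle_primitive (c : seq 'I_d) : simple_cycle c -> primitive tl hd c.
Proof.
case/and3P=> c_nil cyc uniq_c; rewrite /primitive closed_pathE c_nil cyc /=.
apply/forall_inP => v; rewrite mem_Vset_cycle // => v_c.
have := count_uniq_mem v uniq_c; rewrite v_c count_map => /= <-.
by apply/eqP/eq_count => b; rewrite /= eq_sym.
Qed.

Lemma path_hd_invariant (T : Type) (f : 'I_n -> T) (x : 'I_d) (s : seq 'I_d) :
  (forall b, f (hd b) = f (tl b)) -> path consecutive x s ->
  forall b, b \in x :: s -> f (hd b) = f (hd x).
Proof.
move=> f_inv; elim: s x => [|y s IH] x /=; first by move=> _ b /[!inE]/eqP->.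
case/andP=> /eqP hxy pth b /[!inE] /orP[/eqP-> // | /(IH _ pth)->].
by rewrite f_inv hxy.
Qed.

Lemma strongly_connected_invariant (T : Type) (f : 'I_n -> T) :
  strongly_connected tl hd -> (forall b, f (hd b) = f (tl b)) ->
  forall u v, f u = f v.
Proof.
case=> -[|x s] [+ cover] // f_inv; rewrite closed_pathE /= => cyc.
have f_const u : f u = f (hd x).
  have : u \in map hd (x :: s) by rewrite -mem_Vset_cycle // cover inE.
  case/mapP=> b b_in ->; apply: path_hd_invariant b_in => //.
  by move: cyc; rewrite /= rcons_path => /andP[].
by move=> u v; rewrite !f_const.
Qed.
End Cycles.

Section Incidence.
Variables (n d : nat) (tl hd : 'I_d -> 'I_n).
Local Open Scope ring_scope.

Definition incidence : 'M[rat]_(d, n) :=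
  \matrix_(b, v) ((hd b == v)%:R - (tl b == v)%:R).

Definition mdeg_row (c : seq 'I_d) : 'rV[rat]_d := \row_b (count_mem b c)%:R.

Lemma cycle_mdeg_row_incidence (c : seq 'I_d) :
  cycle (consecutive tl hd) c -> mdeg_row c *m incidence = 0.
Proof.
move=> cyc; apply/rowP => v; rewrite !mxE.
under eq_bigr do rewrite !mxE mulr_natl.
rewrite sumr_count_mem sumrB.
by rewrite (cycle_sum_tl (fun u => (u == v)%:R) cyc) subrr.
Qed.

Lemma incidence_tr_kernel (x : 'rV[rat]_n) :
  x *m incidence^T = 0 -> forall b, x 0 (hd b) = x 0 (tl b).
Proof.
move=> /rowP x_ker b; have := x_ker b; rewrite !mxE.
under eq_bigr do rewrite !mxE mulrBr.
by rewrite sumrB !sumr_mul_eq_natr => /eqP; rewrite subr_eq0 => /eqP.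
Qed.

Lemma rank_kermx_incidence_tr :
  strongly_connected tl hd -> (\rank (kermx incidence^T) <= 1)%N.
Proof.
move=> sc; case: (posnP n) => [n0 | n_gt0].
  by rewrite (leq_trans (rank_leq_col _)) ?n0.
apply: leq_trans (rank_leq_row (const_mx 1 : 'rV[rat]_n)); apply: mxrankS.
apply/row_subP => i; set r := row i _.
have r_ker : r *m incidence^T = 0 by apply/sub_kermxP; rewrite row_sub.
clearbody r.
have -> : r = r 0 (Ordinal n_gt0) *: const_mx 1.
  apply/rowP => v; rewrite !mxE mulr1.
  exact: (strongly_connected_invariant (f := r 0) sc (incidence_tr_kernel r_ker)).
exact: scalemx_sub (submx_refl _).
Qed.

Lemma cycle_family_bound k (C : 'I_k -> seq 'I_d) (s : 'I_k -> 'I_d) :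
  strongly_connected tl hd -> (forall i, cycle (consecutive tl hd) (C i)) ->
  (forall i j, count_mem (s i) (C j) = (i == j)) -> (k <= d - n + 1)%N.
Proof.
move=> sc cycC private.
pose V : 'M[rat]_(k, d) := \matrix_i mdeg_row (C i).
have V_ker : (V <= kermx incidence)%MS.
  apply/sub_kermxP/row_matrixP => i.
  by rewrite row_mul rowK row0 cycle_mdeg_row_incidence.
have V_free : row_free V.
  apply/row_freeP; exists (\matrix_(b, j) (s j == b)%:R).
  apply/matrixP => i j; rewrite !mxE; under eq_bigr do rewrite !mxE.
  by rewrite sumr_mul_eq_natr private eq_sym.
have := mxrankS V_ker; rewrite (eqP V_free) mxrank_ker.
have := rank_kermx_incidence_tr sc; rewrite mxrank_ker mxrank_tr.
lia.
Qed.
End Incidence.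

Theorem lemma3p4 (n d m : nat) (tl hd : 'I_d -> 'I_n) (delta : 'I_d -> nat) :
  in_Qndm tl hd m -> in_Omega3 tl hd delta ->
  weight delta <= m * (d - n + 1).
Proof.
case=> sc [_ size_prim] [[h [+ _ h_mdeg]] no_double].
rewrite closed_pathE => /andP[_ /simple_cycle_decomposition[cs [cs_simple h_cs]]].
pose C (i : 'I_(size cs)) := nth [::] cs i.
have C_simple i : simple_cycle tl hd (C i) by apply/(allP cs_simple)/mem_nth.
have deltaE b : delta b = \sum_i count_mem b (C i).
  by rewrite -h_mdeg /mdeg (permP h_cs) count_flatten sumnE big_map (big_nth [::]) big_mkord.
have /fin_all_exists[s private] : forall i, exists b, forall j,
    count_mem b (C j) = (i == j).
  move=> i; apply: exists_private_arrow deltaE _.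
  apply/negP => heavy; apply: no_double; exists (C i).
  by rewrite /double_path simple_cycle_primitive.
have C_cycle i : cycle (consecutive tl hd) (C i) by case/and3P: (C_simple i).
have size_cs := cycle_family_bound sc C_cycle private.
have : weight delta <= size cs * m.
  rewrite /weight (eq_bigr _ (fun b _ => deltaE b)) exchange_big /=.
  apply: (@leq_trans (\sum_(i < size cs) m)); last by rewrite sum_nat_const card_ord.
  apply: leq_sum => i _.
  by rewrite sum_count_mem size_prim // simple_cycle_primitive.
by move/leq_trans; apply; rewrite mulnC leq_mul2l size_cs orbT.
Qed.
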